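(* Let $d\ge3$, let $M\ge1$ be a real number, let $|\cdot|_v$ be an absolute value on $\overline{\mathbb Q}$, and let $\lambda,\alpha\in\overline{\mathbb Q}$. If $|\alpha|_v\ge|\lambda|_v/M\ge2M$, then for all integers $0\le n_0\le n$, $$\left|\frac{\log M_{n,v}}{d^n}-\frac{\log M_{n_0,v}}{d^{n_0}}\right|\le\frac{\log 2}{d^{n_0}(d-1)}.$$
   Context: Define $A_0=\alpha$, $B_0=1$, and for $n\ge0$, $A_{n+1}=A_n^d+\lambda B_n^d$, $B_{n+1}=A_nB_n^{d-1}$ (so $[A_n:B_n]$ is the $n$-th iterate of $\alpha$ under $z\mapsto(z^d+\lambda)/z$). Set $M_{n,v}=\max\{|A_n|_v,|B_n|_v\}$. *)

From HB Require Import structures.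
From mathcomp Require Import all_boot all_order all_algebra all_field.
From mathcomp Require Import all_classical all_reals all_analysis.
Set Implicit Arguments. Unset Strict Implicit. Unset Printing Implicit Defensive.
Import Order.TTheory GRing.Theory Num.Theory.
Local Open Scope ring_scope.

(* algC plays the role of \overline{Q}. *)

Definition is_absval (R : realType) (v : algC -> R) : Prop :=
  [/\ forall x, 0 <= v x,
      forall x, v x = 0 <-> x = 0,
      forall x y, v (x * y) = v x * v y &
      forall x y, v (x + y) <= v x + v y].

Fixpoint AB (d : nat) (lam alpha : algC) (n : nat) : algC * algC :=
  match n with
  | 0 => (alpha, 1)
  | n'.+1 => let: (A, B) := AB d lam alpha n' in
             (A ^+ d + lam * B ^+ d, A * B ^+ (d.-1))
  end.

Definition Mnv (R : realType) (v : algC -> R) (d : nat) (lam alpha : algC)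
  (n : nat) : R :=
  Num.max (v (AB d lam alpha n).1) (v (AB d lam alpha n).2).

From HB Require Import structures.
From mathcomp Require Import all_boot all_order all_algebra all_field.
From mathcomp Require Import all_classical all_reals all_analysis.
From mathcomp Require Import ring lra.
Import Order.TTheory GRing.Theory Num.Theory.
Local Open Scope ring_scope.
Set Implicit Arguments. Unset Strict Implicit. Unset Printing Implicit Defensive.

(* Put L := |lambda|_v / M, so that 2 <= L, |lambda|_v <= L^2 / 2 and L <= |alpha|_v.
   The inequality L |B_n| <= |A_n| then propagates along the iteration (it holds at
   n = 0), so A_n dominates: M_{n,v} = |A_n|_v, and |lambda B_n^d| is at most half of
   |A_n^d|.  Hence M_{n+1,v} lies between M_{n,v}^d / 2 and 2 M_{n,v}^d, that is
   |log M_{n+1,v} - d log M_{n,v}| <= log 2; dividing by d^(n+1) and summing the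
   geometric series of these errors gives the bound. *)

Section AbsoluteValue.
Variables (R : realType) (v : algC -> R).
Hypothesis hv : is_absval v.

Lemma absval_ge0 x : 0 <= v x. Proof. by case: hv. Qed.

Lemma absvalM x y : v (x * y) = v x * v y. Proof. by case: hv. Qed.

Lemma absval_lerD x y : v (x + y) <= v x + v y. Proof. by case: hv. Qed.

Lemma absval1 : v 1 = 1.
Proof.
have v1_neq0 : v 1 != 0.
  by case: hv => _ hz _ _; apply/eqP => /hz/eqP; rewrite oner_eq0.
by apply: (mulfI v1_neq0); rewrite -absvalM !mulr1.
Qed.

Lemma absvalX x n : v (x ^+ n) = v x ^+ n.
Proof.
elim: n => [|n IHn]; first by rewrite !expr0 absval1.
by rewrite !exprS absvalM IHn.
Qed.

Lemma absvalN x : v (- x) = v x.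
Proof.
have vN1 : v (-1) = 1.
  by apply/eqP; rewrite -sqrp_eq1 ?absval_ge0 // -absvalX sqrrN expr1n absval1.
by rewrite -mulN1r absvalM vN1 mul1r.
Qed.

Lemma absval_lerB x y : v x - v y <= v (x + y).
Proof. by rewrite lerBlDr -[v y]absvalN -{1}(addrK y x) absval_lerD. Qed.

End AbsoluteValue.

Lemma ln_dist_le_ln2 (R : realType) (x y : R) :
  0 < y -> y / 2 <= x <= 2 * y -> `|ln x - ln y| <= ln 2.
Proof.
move=> y_gt0 /andP[lo hi].
have x_gt0 : 0 < x by apply: lt_le_trans lo; rewrite divr_gt0.
have two_gt0 : (0 : R) < 2 by [].
have hi' : ln x <= ln 2 + ln y by rewrite -lnM ?posrE // ler_ln ?posrE ?mulr_gt0.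
have lo' : ln y - ln 2 <= ln x by rewrite -ln_div ?posrE // ler_ln ?posrE ?divr_gt0.
rewrite ler_norml; apply/andP; split; lra.
Qed.

Lemma scaled_telescope (R : realFieldType) (D c : R) (u : nat -> R) :
  1 < D -> (forall n, `|u n.+1 - u n * D| <= c) ->
  forall n0 n, (n0 <= n)%N ->
  `|u n / D ^+ n - u n0 / D ^+ n0| <= c / (D ^+ n0 * (D - 1)).
Proof.
move=> D_gt1 hstep n0 n /subnKC <-; set k := (n - n0)%N.
have D_gt0 : 0 < D by lra.
have DB1_gt0 : 0 < D - 1 by lra.
have c_ge0 : 0 <= c by apply: le_trans (hstep 0%N).
have step m : `|u m.+1 / D ^+ m.+1 - u m / D ^+ m| <= c / D ^+ m.+1.
  have -> : u m.+1 / D ^+ m.+1 - u m / D ^+ m = (u m.+1 - u m * D) / D ^+ m.+1.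
    by rewrite exprS; field; rewrite expf_neq0 ?gt_eqF.
  by rewrite normrM normfV (gtr0_norm (exprn_gt0 _ D_gt0)) ler_pM2r ?invr_gt0 ?exprn_gt0.
(* The right-hand side is the sum of the step bounds [c / D^m] for [n0 < m <= n0 + k]. *)
have tele : `|u (n0 + k)%N / D ^+ (n0 + k) - u n0 / D ^+ n0| <=
    c / (D ^+ n0 * (D - 1)) - c / (D ^+ (n0 + k) * (D - 1)).
  elim: k => [|k IHk]; first by rewrite addn0 !subrr normr0.
  rewrite addnS; apply: le_trans (ler_distD (u (n0 + k)%N / D ^+ (n0 + k)) _ _) _.
  apply: le_trans (lerD (step _) IHk) _.
  rewrite le_eqVlt; apply/orP; left; apply/eqP; rewrite exprS.
  by field; rewrite !gt_eqF ?exprn_gt0.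
apply: le_trans tele _; rewrite lerBlDr lerDl.
by rewrite divr_ge0 // mulr_ge0 ?exprn_ge0 ?ltW.
Qed.

(* Read [a, b, K] as [|A_n|, |B_n|, |lambda|]: then [lambda B_n^d] is at most half of
   [A_n^d], and [L |B_n| <= |A_n|] propagates to [n + 1]. *)
Lemma dominant_term_bounds (R : realFieldType) (d : nat) (K L a b : R) :
  (3 <= d)%N -> 2 <= L -> 0 <= K <= L ^+ 2 / 2 -> 0 < b -> L * b <= a ->
  K * b ^+ d <= a ^+ d / 2 /\ L * (a * b ^+ d.-1) + K * b ^+ d <= a ^+ d.
Proof.
move=> d_ge3 L_ge2 /andP[K_ge0 K_le] b_gt0 Lb_le_a.
have a_ge0 : 0 <= a by nra.
have -> : d = d.-1.+1 by rewrite prednK // (leq_trans _ d_ge3).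
rewrite succnK !exprS; set B := b ^+ d.-1; set P := a ^+ d.-1.
have B_gt0 : 0 < B by rewrite exprn_gt0.
have LB_le_P : L ^+ 2 * B <= P.
  apply: le_trans (_ : (L * b) ^+ d.-1 <= P); last first.
    by rewrite lerXn2r ?nnegrE // ?mulr_ge0; lra.
  rewrite exprMn ler_pM2r // ler_eXn2l; last lra.
  by rewrite -ltnS prednK // (leq_trans _ d_ge3).
have b_le_a : b <= a by nra.
have aB_ge0 : 0 <= a * B by rewrite mulr_ge0 // ltW.
have LBa_le_Pa : L ^+ 2 * B * a <= P * a by rewrite ler_wpM2r.
have KbB_le : K * (b * B) <= L ^+ 2 / 2 * (b * B) by rewrite ler_wpM2r // mulr_ge0 // ltW.
have LBb_le_LBa : L ^+ 2 * B * b <= L ^+ 2 * B * a.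
  by rewrite ler_wpM2l // mulr_ge0 ?exprn_ge0 ?ltW //; lra.
rewrite expr2 in LBa_le_Pa KbB_le LBb_le_LBa; split.
  nra.
have LBLb_le : L * B * (L * b) <= L * B * a by rewrite ler_wpM2l // mulr_ge0 ?ltW //; lra.
have LaB_le : 3 / 2 * (L * (a * B)) <= L * (L * (a * B)).
  by rewrite ler_wpM2r // ?mulr_ge0 //; lra.
lra.
Qed.

Lemma AB_succ d lam alpha n : AB d lam alpha n.+1 =
  ((AB d lam alpha n).1 ^+ d + lam * (AB d lam alpha n).2 ^+ d,
   (AB d lam alpha n).1 * (AB d lam alpha n).2 ^+ d.-1).
Proof. by rewrite /=; case: (AB d lam alpha n). Qed.

Section Iteration.
Variables (R : realType) (v : algC -> R) (d : nat) (lam alpha : algC) (L : R).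
Hypotheses (hv : is_absval v) (d_ge3 : (3 <= d)%N) (L_ge2 : 2 <= L)
  (lam_le : v lam <= L ^+ 2 / 2) (alpha_ge : L <= v alpha).

Let a n := v (AB d lam alpha n).1.
Let b n := v (AB d lam alpha n).2.

Lemma absval_AB1_succ n :
  a n ^+ d - v lam * b n ^+ d <= a n.+1 <= a n ^+ d + v lam * b n ^+ d.
Proof.
rewrite /a /b AB_succ /= -!(absvalX hv) -!(absvalM hv).
by rewrite absval_lerB ?absval_lerD.
Qed.

Lemma absval_AB2_succ n : b n.+1 = a n * b n ^+ d.-1.
Proof. by rewrite /a /b AB_succ /= (absvalM hv) (absvalX hv). Qed.

Let L_gt1 : 1 < L. Proof. by apply: lt_le_trans L_ge2; rewrite ltr1n. Qed.

Let lam_bounds : 0 <= v lam <= L ^+ 2 / 2. Proof. by rewrite absval_ge0. Qed.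

Lemma AB1_dominates n : 0 < b n /\ L * b n <= a n.
Proof.
elim: n => [|n [b_gt0 Lb_le_a]].
  by rewrite /a /b /= (absval1 hv) mulr1 ltr01.
have [_ dominant] := dominant_term_bounds d_ge3 L_ge2 lam_bounds b_gt0 Lb_le_a.
have /andP[lower _] := absval_AB1_succ n.
have a_gt0 : 0 < a n by rewrite (lt_le_trans _ Lb_le_a) // mulr_gt0 // (lt_trans ltr01).
by rewrite absval_AB2_succ mulr_gt0 ?exprn_gt0 //; split=> //; lra.
Qed.

Lemma AB_absval_lt n : 0 < b n < a n.
Proof.
have [b_gt0 Lb_le_a] := AB1_dominates n.
by rewrite b_gt0 (lt_le_trans _ Lb_le_a) // ltr_pMl.
Qed.

Lemma Mnv_AB n : Mnv v d lam alpha n = a n.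
Proof. by have /andP[_ /ltW] := AB_absval_lt n; rewrite /Mnv => /max_l. Qed.

Lemma Mnv_gt0 n : 0 < Mnv v d lam alpha n.
Proof. by have /andP[b_gt0 /(lt_trans b_gt0)] := AB_absval_lt n; rewrite Mnv_AB. Qed.

Lemma Mnv_S_bounds n :
  Mnv v d lam alpha n ^+ d / 2 <= Mnv v d lam alpha n.+1 <= 2 * Mnv v d lam alpha n ^+ d.
Proof.
have [b_gt0 Lb_le_a] := AB1_dominates n.
have [small _] := dominant_term_bounds d_ge3 L_ge2 lam_bounds b_gt0 Lb_le_a.
have /andP[lower upper] := absval_AB1_succ n.
have : 0 <= v lam * b n ^+ d by rewrite mulr_ge0 ?absval_ge0 ?exprn_ge0 ?ltW.
by rewrite !Mnv_AB; lra.
Qed.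

End Iteration.

Theorem proposition5p6 (R : realType) (d : nat) (M : R) (v : algC -> R)
    (lam alpha : algC) :
  (3 <= d)%N -> 1 <= M -> is_absval v ->
  v lam / M <= v alpha -> 2 * M <= v lam / M ->
  forall n0 n : nat, (n0 <= n)%N ->
  `| ln (Mnv v d lam alpha n) / (d%:R ^+ n) -
     ln (Mnv v d lam alpha n0) / (d%:R ^+ n0) |
    <= ln 2 / (d%:R ^+ n0 * (d%:R - 1)).
Proof.
move=> d_ge3 M_ge1 hv lamM_le_alpha M2_le_lamM n0 n le_n0n.
set L := v lam / M in lamM_le_alpha M2_le_lamM.
have L_ge2 : 2 <= L by apply: le_trans M2_le_lamM; lra.
have lam_le : v lam <= L ^+ 2 / 2.
  have -> : v lam = L * M by rewrite /L divfK // gt_eqF //; lra.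
  rewrite expr2; nra.
have Mnv_gt0 := Mnv_gt0 hv d_ge3 L_ge2 lam_le lamM_le_alpha.
apply: (scaled_telescope (u := fun m => ln (Mnv v d lam alpha m))) le_n0n => [|m].
  by rewrite ltr1n (leq_trans _ d_ge3).
rewrite mulr_natr -lnXn //.
exact/ln_dist_le_ln2/(Mnv_S_bounds hv d_ge3 L_ge2 lam_le lamM_le_alpha)/exprn_gt0.
Qed.
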